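(* The full subcategory $\overline{\mathcal{A}}_p(S)$ of $\mathcal{A}_p(S)$ is a semi-skeleton of $\mathcal{A}_p(S)$, and its number of objects is $\sum_{L\in\mathcal{L}}|H^1(L,T)|$.
   Context: Conventions: normalised cocycles $Z^n$, coboundaries $B^n$, cohomology $H^n$ for right modules written additively; $\mathrm{Ext}(\tau)$ is $G\times M$ with $(g,m)(h,n)=(gh,m^h+n+\tau(g,h))$. Setting: $S$ infinite pro-$p$-group of finite coclass; $T=\gamma_\ell(S)$ ($\ell$ large), $T\cong\mathbb{Z}_p^d$, $P=S/T$ finite, the series $T_0=T$, $T_{i+1}=[T_i,S]$ with all indices $p$; $T$ an additive $P$-module via conjugation; $S=\mathrm{Ext}(\rho)$, $\rho\in Z^2(P,T)$, $T=\{(1,t)\}$. For $L\leq P$, $\overline{L}$ is its full preimage in $S$. $\mathcal{L}$ = elementary abelian $L\leq P$ with $\rho_L\in B^2(L,T)$. For $L\in\mathcal{L}$ fix a complement $C_L=\{(l,t_L(l))\mid l\in L\}$ to $T$ in $\overline{L}$ and put $C_L(\delta)=\{(l,t_L(l)+\delta(l))\}$ for $\delta\in Z^1(L,T)$. Let $T^1(L,T)$ be a transversal of $B^1(L,T)$ in $Z^1(L,T)$. $\mathcal{A}_p(S)$ is the Quillen category (objects: elementary abelian subgroups of $S$; morphisms: injective homomorphisms induced by conjugation in $S$), and $\overline{\mathcal{A}}_p(S)$ is its full subcategory on the objects $C_L(\gamma)$ with $L\in\mathcal{L}$, $\gamma\in T^1(L,T)$. A semi-skeleton of a category is a full subcategory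 containing at least one object from each isomorphism class of objects. *)

From HB Require Import structures.
From mathcomp Require Import all_boot all_order all_algebra all_fingroup all_solvable.
From mathcomp Require Import boolp classical_sets cardinality.
Set Implicit Arguments. Unset Strict Implicit. Unset Printing Implicit Defensive.
Import GRing.Theory.
Local Open Scope ring_scope.
Local Open Scope classical_set_scope.

(* Z_p is modelled as the inverse limit of the Z/p^n: coherent sequences
   x : nat -> nat with x n < p^n and x (n+1) mod p^n = x n, with
   componentwise addition mod p^n. *)
Definition padic_seq (p : nat) (x : nat -> nat) : Prop :=
  forall n, (x n < p ^ n)%N /\ (x n.+1 %% p ^ n)%N = x n.

Definition iso_to_Zp_pow (p d : nat) (T : zmodType) : Prop :=
  exists f : T -> 'I_d -> nat -> nat,
    [/\ forall t i, padic_seq p (f t i),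
        injective f,
        (forall g : 'I_d -> nat -> nat, (forall i, padic_seq p (g i)) ->
            exists t, f t = g) &
        forall s t i n, f (s + t) i n = ((f s i n + f t i n) %% p ^ n)%N].

Definition right_module (gT : finGroupType) (T : zmodType) (act : T -> gT -> T) :=
  [/\ forall t, act t 1%g = t,
      forall t g h, act t (g * h)%g = act (act t g) h &
      forall g s t, act (s + t) g = act s g + act t g].

Section Ext.
Variables (gT : finGroupType) (T : zmodType) (act : T -> gT -> T).

(* normalised 2-cocycles Z^2(P,T) (P = the whole finite group gT) *)
Definition Z2 (rho : gT -> gT -> T) : Prop :=
  [/\ forall g h k, act (rho g h) k + rho (g * h)%g k = rho h k + rho g (h * k)%g,
      forall g, rho 1%g g = 0 &
      forall g, rho g 1%g = 0].

Definition B2 (L : {group gT}) (rho : gT -> gT -> T) : Prop :=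
  exists f : gT -> T, forall x y, x \in L -> y \in L ->
    rho x y = act (f x) y + f y - f (x * y)%g.

(* normalised 1-cocycles and 1-coboundaries of L with values in T
   (functions L -> T, extended by 0 outside L) *)
Definition Z1 (L : {group gT}) : set (gT -> T) :=
  [set d | (forall x y, x \in L -> y \in L -> d (x * y)%g = act (d x) y + d y)
           /\ (forall x, x \notin L -> d x = 0)].

Definition B1 (L : {group gT}) : set (gT -> T) :=
  [set d | (exists m : T, forall x, x \in L -> d x = act m x - m)
           /\ (forall x, x \notin L -> d x = 0)].

Definition H1 (L : {group gT}) : set (set (gT -> T)) :=
  [set C | exists2 d, Z1 L d &
     C = [set d' | Z1 L d' /\ B1 L (fun x => d' x - d x)]].

Variable rho : gT -> gT -> T.

(* the group S = Ext(rho), carrier gT * T *)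
Definition extmul (x y : gT * T) : gT * T :=
  ((x.1 * y.1)%g, act x.2 y.1 + y.2 + rho x.1 y.1).
Definition extone : gT * T := (1%g, 0).

Definition subgroupS (E : set (gT * T)) : Prop :=
  [/\ E extone,
      forall x y, E x -> E y -> E (extmul x y) &
      forall x, E x -> exists2 y, E y & extmul x y = extone].

Definition elemabS (p : nat) (E : set (gT * T)) : Prop :=
  [/\ subgroupS E, finite_set E,
      forall x y, E x -> E y -> extmul x y = extmul y x &
      forall x, E x -> iter p (extmul x) extone = extone].

(* morphisms of A_p(S): injective maps E -> E' induced by conjugation in S,
   phi x = s^-1 x s, i.e. s * phi x = x * s *)
Definition Amor (E E' : set (gT * T)) (phi : gT * T -> gT * T) : Prop :=
  [/\ forall x, E x -> E' (phi x),
      forall x y, E x -> E y -> phi x = phi y -> x = y &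
      exists s, forall x, E x -> extmul s (phi x) = extmul x s].

Definition Aiso (E E' : set (gT * T)) : Prop :=
  exists phi psi, [/\ Amor E E' phi, Amor E' E psi,
                      forall x, E x -> psi (phi x) = x &
                      forall y, E' y -> phi (psi y) = y].

Definition calL (p : nat) (L : {group gT}) : Prop := abelem p L /\ B2 L rho.

Definition CL (tL : {group gT} -> gT -> T) (L : {group gT}) (d : gT -> T)
  : set (gT * T) := [set x | x.1 \in L /\ x.2 = tL L x.1 + d x.1].

End Ext.

From HB Require Import structures.
From mathcomp Require Import all_boot all_order all_algebra all_fingroup all_solvable.
From mathcomp Require Import boolp classical_sets cardinality.
Set Implicit Arguments. Unset Strict Implicit. Unset Printing Implicit Defensive.
Import GRing.Theory.
Local Open Scope ring_scope.
Local Open Scope classical_set_scope.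
Local Open Scope card_scope.

(* Since T is torsion-free, an elementary abelian subgroup E of S meets T
   trivially, so it is the graph of a map s : L -> T over its image L in P;
   L is elementary abelian and s witnesses that rho_L is a coboundary, so
   L lies in the family.  Then s - t_L is a 1-cocycle, and conjugating by an
   element of T moves E onto C_L(gamma) for the transversal representative
   gamma of its class.  Conversely each C_L(gamma) is elementary abelian, and
   (L, gamma) is recovered from C_L(gamma), which gives the count. *)

Lemma Zp_pow_torsion_free p d (T : zmodType) : (0 < p)%N -> iso_to_Zp_pow p d T ->
  forall u : T, u *+ p = 0 -> u = 0.
Proof.
move=> p_gt0 [f [f_padic f_inj _ fD]] u pu0.
have f0 i n : f 0 i n = 0%N.
  have [lt_f0 _] := f_padic 0 i n; have := fD 0 0 i n; rewrite addr0.
  move: lt_f0; set z := f 0 i n => lt_z ez.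
  have : (z + z == 0 + z %[mod p ^ n])%N by rewrite -ez add0n modn_small.
  by rewrite eqn_modDr mod0n modn_small // => /eqP.
have fMn k i n : f (u *+ k) i n = (k * f u i n %% p ^ n)%N.
  elim: k => [|k IH]; first by rewrite mulr0n f0 mul0n mod0n.
  by rewrite mulrS fD IH modnDmr mulSn.
have fu0 i n : f u i n = 0%N.
  have [_ <-] := f_padic u i n.
  have := fMn p i n.+1; rewrite pu0 f0 => /esym/eqP.
  by rewrite -/(dvdn _ _) expnS dvdn_pmul2l // => /eqP.
by apply: f_inj; apply: funext => i; apply: funext => n; rewrite fu0 f0.
Qed.

Section RightModule.
Variables (gT : finGroupType) (T : zmodType) (act : T -> gT -> T).
Hypothesis actM : right_module act.

Lemma act0 g : act 0 g = 0.
Proof.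
have [_ _ actD] := actM; have := actD g 0 0; rewrite addr0 => e.
by apply: (addrI (act 0 g)); rewrite addr0 -e.
Qed.

Lemma actN s g : act (- s) g = - act s g.
Proof.
have [_ _ actD] := actM.
by apply/eqP; rewrite -subr_eq0 opprK -actD addNr act0.
Qed.

Lemma actB s t g : act (s - t) g = act s g - act t g.
Proof. by have [_ _ actD] := actM; rewrite actD actN. Qed.

Variable L : {group gT}.

Lemma Z1_1 d : Z1 act L d -> d 1%g = 0.
Proof.
have [act1 _ _] := actM; case=> dM _; have := dM 1%g 1%g (group1 L) (group1 L).
by rewrite mulg1 act1 => e; apply: (addrI (d 1%g)); rewrite addr0 -e.
Qed.

Lemma B1_refl a : B1 act L (fun x => a x - a x).
Proof.
split; last by move=> x _; rewrite subrr.
by exists 0 => x _; rewrite act0 !subrr.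
Qed.

Lemma B1_sym a b : B1 act L (fun x => a x - b x) -> B1 act L (fun x => b x - a x).
Proof.
move=> [[m Hm] Hout]; split; last by move=> x xL; rewrite -opprB Hout // oppr0.
by exists (- m) => x xL; rewrite -[b x - a x]opprB Hm // actN opprK opprB addrC.
Qed.

Lemma B1_trans a b c : B1 act L (fun x => a x - b x) ->
  B1 act L (fun x => b x - c x) -> B1 act L (fun x => a x - c x).
Proof.
move=> [[m1 Hm1] Hout1] [[m2 Hm2] Hout2]; have [_ _ actD] := actM.
have split_ac x : a x - c x = (a x - b x) + (b x - c x) by rewrite addrA subrK.
split; last by move=> x xL; rewrite split_ac Hout1 // Hout2 // addr0.
by exists (m1 + m2) => x xL; rewrite split_ac Hm1 // Hm2 // actD opprD addrACA.
Qed.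

End RightModule.

Section Extension.
Variables (gT : finGroupType) (T : zmodType) (act : T -> gT -> T) (rho : gT -> gT -> T).
Hypotheses (actM : right_module act) (rhoZ2 : Z2 act rho).

Local Notation extmul := (extmul act rho).
Local Notation extone := (extone gT T).

Lemma iter_extmul_fst x k : (iter k (extmul x) extone).1 = (x.1 ^+ k)%g.
Proof. by elim: k => [|k IH] //=; rewrite IH expgS. Qed.

Lemma iter_extmul_central u k : iter k (extmul (1%g, u)) extone = (1%g, u *+ k).
Proof.
have [act1 _ _] := actM; have [_ rho1 _] := rhoZ2.
by elim: k => [|k IH] //=; rewrite IH /extmul /= mulg1 act1 rho1 addr0 mulrS.
Qed.

Lemma elemab_fibre_uniq p E x t t' :
  (forall u : T, u *+ p = 0 -> u = 0) -> elemabS act rho p E ->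
  E (x, t) -> E (x, t') -> t = t'.
Proof.
move=> torsionT [[_ EM EV] _ _ Eexp] Ext Ext'.
have [act1 actM' _] := actM.
have [[y1 y2] Ey [/= xy1 xy2]] := EV _ Ext.
move/eqP: xy2; rewrite -addrA addr_eq0 => /eqP y2E.
(* (x, t') (x, t)^-1 is the element (1, (t' - t)^y1) of T, which has order p *)
have : E (1%g, act (t' - t) y1).
  by have := EM _ _ Ext' Ey; rewrite /extmul /= xy1 -addrA actB // y2E opprK.
move=> /Eexp; rewrite iter_extmul_central => -[] /torsionT tt'0.
have yx1 : (y1 * x = 1)%g by rewrite -(mulg1_eq xy1) mulVg.
by apply/esym/subr0_eq; rewrite -(act1 (t' - t)) -yx1 actM' tt'0 !act0.
Qed.

Section Complement.
Variables (tL : {group gT} -> gT -> T) (L : {group gT}).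
Hypothesis CL0_sub : subgroupS act rho (CL tL L (fun _ => 0)).

Lemma tL1 : tL L 1%g = 0.
Proof. by case: CL0_sub => [[_ /= e] _ _]; rewrite e addr0. Qed.

Lemma tL_mul x y : x \in L -> y \in L ->
  act (tL L x) y + tL L y + rho x y = tL L (x * y)%g.
Proof.
move=> xL yL; have [_ CLM _] := CL0_sub.
have [_ /= e] := CLM (x, tL L x + 0) (y, tL L y + 0) (conj xL erefl) (conj yL erefl).
by move: e; rewrite !addr0.
Qed.

Lemma CL_mul g x y : Z1 act L g -> x \in L -> y \in L ->
  extmul (x, tL L x + g x) (y, tL L y + g y) = ((x * y)%g, tL L (x * y)%g + g (x * y)%g).
Proof.
move=> [gM _] xL yL; have [_ _ actD] := actM.
by rewrite /extmul /= -tL_mul // gM // actD addrACA (addrAC _ (rho x y)).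
Qed.

Lemma CL_elemab p g : prime p -> abelem p L -> Z1 act L g -> elemabS act rho p (CL tL L g).
Proof.
move=> p_pr abelL Zg; have [cLL Lexp] := abelemP p_pr abelL.
have one_CL : extone = (1%g, tL L 1%g + g 1%g) by rewrite tL1 (Z1_1 actM Zg) addr0.
have iter_CL x k : x \in L ->
    iter k (extmul (x, tL L x + g x)) extone = ((x ^+ k)%g, tL L (x ^+ k)%g + g (x ^+ k)%g).
  move=> xL; elim: k => [|k IH]; first by rewrite expg0.
  by rewrite iterS IH CL_mul // ?groupX // expgS.
split.
- split.
  + by rewrite one_CL; split => //=; exact: group1.
  + move=> [x1 x2] [y1 y2] [/= xL ->] [/= yL ->].
    by rewrite CL_mul //; split => //=; exact: groupM.
  + move=> [x1 x2] [/= xL ->]; exists (x1^-1, tL L x1^-1 + g x1^-1)%g.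
      by split => //=; rewrite groupV.
    by rewrite CL_mul ?groupV // mulgV one_CL.
- apply: (@sub_finite_set _ _ ((fun x => (x, tL L x + g x)) @` [set x | x \in L])).
    by move=> [x1 x2] [/= xL ->]; exists x1.
  exact: finite_image.
- move=> [x1 x2] [y1 y2] [/= xL ->] [/= yL ->].
  by rewrite !CL_mul // (centsP cLL x1 xL y1 yL).
- by move=> [x1 x2] [/= xL ->]; rewrite iter_CL // Lexp // one_CL.
Qed.

End Complement.

Section ElementaryAbelian.
Variables (p : nat) (E : set (gT * T)).
Hypotheses (p_pr : prime p) (torsionT : forall u : T, u *+ p = 0 -> u = 0).
Hypothesis EabS : elemabS act rho p E.

Definition elemab_proj_set : {set gT} := [set x | `[< exists t, E (x, t) >]]%SET.

Lemma elemab_projP x : reflect (exists t, E (x, t)) (x \in elemab_proj_set).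
Proof. by rewrite inE; apply: asboolP. Qed.

Lemma elemab_proj_group_set : group_set elemab_proj_set.
Proof.
have [[E1 EM _] _ _ _] := EabS.
apply/group_setP; split; first by apply/elemab_projP; exists 0.
move=> x y /elemab_projP[t Ext] /elemab_projP[u Eyu]; apply/elemab_projP.
by exists (act t y + u + rho x y); exact: EM _ _ Ext Eyu.
Qed.

Definition elemab_proj := Group elemab_proj_group_set.

Definition elemab_lift x := xget 0 [set t | E (x, t)].

Lemma elemab_lift_in x : x \in elemab_proj -> E (x, elemab_lift x).
Proof. by move/elemab_projP => ex; apply: xgetPex ex. Qed.

Lemma mem_elemab_proj x t : E (x, t) -> x \in elemab_proj.
Proof. by move=> Ext; apply/elemab_projP; exists t. Qed.

Lemma elemab_liftE x t : E (x, t) -> t = elemab_lift x.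
Proof.
move=> Ext; apply: (elemab_fibre_uniq torsionT EabS Ext).
exact/elemab_lift_in/(mem_elemab_proj Ext).
Qed.

Lemma elemab_lift_mul x y : x \in elemab_proj -> y \in elemab_proj ->
  act (elemab_lift x) y + elemab_lift y + rho x y = elemab_lift (x * y)%g.
Proof.
have [[_ EM _] _ _ _] := EabS => xL yL.
exact: elemab_liftE (EM _ _ (elemab_lift_in xL) (elemab_lift_in yL)).
Qed.

Lemma elemab_proj_calL : calL act rho p elemab_proj.
Proof.
have [_ _ Ecomm Eexp] := EabS; split.
- apply/(abelemP p_pr); split.
  + apply/centsP => x xL y yL.
    by have := Ecomm _ _ (elemab_lift_in xL) (elemab_lift_in yL); case.
  + move=> x xL; have := Eexp _ (elemab_lift_in xL) => /(congr1 fst).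
    by rewrite iter_extmul_fst.
- exists (fun x => - elemab_lift x) => x y xL yL.
  by rewrite actN // -(elemab_lift_mul xL yL) opprK -opprD addKr.
Qed.

Variable tL : {group gT} -> gT -> T.
Hypothesis CL0_sub : subgroupS act rho (CL tL elemab_proj (fun _ => 0)).

Definition elemab_cocycle x :=
  if x \in elemab_proj then elemab_lift x - tL elemab_proj x else 0.

Lemma elemab_cocycle_Z1 : Z1 act elemab_proj elemab_cocycle.
Proof.
split; last by move=> x /negbTE; rewrite /elemab_cocycle => ->.
move=> x y xL yL; rewrite /elemab_cocycle xL yL groupM //.
rewrite -elemab_lift_mul // -tL_mul // actB //.
by rewrite (opprD (_ + _)) addrACA subrr addr0 opprD addrACA.
Qed.

Lemma elemab_iso_CL g : B1 act elemab_proj (fun x => elemab_cocycle x - g x) ->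
  Aiso act rho E (CL tL elemab_proj g).
Proof.
move=> [[m Hm] _]; have [act1 _ _] := actM; have [_ rho1l rho1r] := rhoZ2.
have liftE x : x \in elemab_proj ->
    elemab_lift x = tL elemab_proj x + g x + (act m x - m).
  by move=> xL; rewrite -Hm // /elemab_cocycle xL addrC (addrC (tL _ _)) addrA !subrK.
(* phi is conjugation by (1, m), and psi by its inverse (1, -m) *)
exists (fun x => (x.1, tL elemab_proj x.1 + g x.1)), (fun y => (y.1, elemab_lift y.1)).
split.
- split.
  + by move=> [x1 x2] Ex; split => //=; exact: mem_elemab_proj Ex.
  + move=> [x1 x2] [y1 y2] Ex Ey /= [e1 _]; move: Ey; rewrite -e1 => Ey.
    by rewrite (elemab_liftE Ex) (elemab_liftE Ey).
  + exists (1%g, m) => [[x1 x2]] Ex /=.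
    rewrite /extmul /= mul1g mulg1 act1 rho1l rho1r !addr0 (elemab_liftE Ex).
    rewrite liftE ?(mem_elemab_proj Ex) //; congr pair.
    by rewrite -[RHS]addrA subrK addrC.
- split.
  + by move=> [y1 y2] [/= yL _]; exact: elemab_lift_in.
  + by move=> [x1 x2] [y1 y2] [/= xL ->] [/= yL ->] /= [->].
  + exists (1%g, - m) => [[y1 y2]] [/= yL ->].
    rewrite /extmul /= mul1g mulg1 act1 rho1l rho1r !addr0 actN // liftE //.
    by congr pair; rewrite addrCA addKr.
- by move=> [x1 x2] Ex /=; rewrite (elemab_liftE Ex).
- by move=> [y1 y2] [/= _ ->].
Qed.

End ElementaryAbelian.

End Extension.

Section Counting.
Variables (gT : finGroupType) (T : zmodType) (act : T -> gT -> T).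
Hypothesis actM : right_module act.

Definition B1_transversal (L : {group gT}) (X : set (gT -> T)) :=
  X `<=` Z1 act L /\
  forall d, Z1 act L d -> exists! g, X g /\ B1 act L (fun x => d x - g x).

Definition coh_class (L : {group gT}) (g : gT -> T) :=
  [set d | Z1 act L d /\ B1 act L (fun x => d x - g x)].

Lemma H1_transversalE L X : B1_transversal L X -> H1 act L = coh_class L @` X.
Proof.
move=> [XZ1 Xrepr]; apply/seteqP; split=> C.
- move=> [d Zd ->]; have [g [[Xg Bdg] _]] := Xrepr d Zd; exists g => //.
  apply/seteqP; split=> d' [Zd' Bd']; split=> //.
    exact: B1_trans Bd' (B1_sym actM Bdg).
  exact: B1_trans Bd' Bdg.
- by move=> [g Xg <-]; exists g => //; exact: XZ1.
Qed.

Lemma coh_class_inj L X g g' : B1_transversal L X -> X g -> X g' ->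
  coh_class L g = coh_class L g' -> g = g'.
Proof.
move=> [XZ1 Xrepr] Xg Xg' eq_cls.
have : coh_class L g' g' by split; [exact: XZ1 | exact: B1_refl].
rewrite -eq_cls => -[_ Bg'g].
have [h [_ h_uniq]] := Xrepr g' (XZ1 g' Xg').
by rewrite -(h_uniq g' (conj Xg' (B1_refl actM _ _))) (h_uniq g (conj Xg Bg'g)).
Qed.

Lemma CL_inj (tL : {group gT} -> gT -> T) L L' g g' :
  Z1 act L g -> Z1 act L' g' -> CL tL L g = CL tL L' g' -> L = L' /\ g = g'.
Proof.
move=> [_ g_out] [_ g'_out] eq_CL.
have eqL : L = L'.
  apply/val_inj/setP => x; apply/idP/idP => xL.
    have : CL tL L g (x, tL L x + g x) by [].
    by rewrite eq_CL => -[].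
  have : CL tL L' g' (x, tL L' x + g' x) by [].
  by rewrite -eq_CL => -[].
subst L'; split=> //; apply: funext => x.
have [xL | xNL] := boolP (x \in L); last by rewrite g_out ?g'_out.
have : CL tL L g (x, tL L x + g x) by [].
by rewrite eq_CL => -[_ /= /addrI].
Qed.

Lemma card_CL_H1 (inL : {group gT} -> Prop) (tL : {group gT} -> gT -> T)
    (Tr : {group gT} -> set (gT -> T)) :
  (forall L, inL L -> B1_transversal L (Tr L)) ->
  [set E | exists L g, [/\ inL L, Tr L g & E = CL tL L g]]
    #= [set Lc : {group gT} * set (gT -> T) | inL Lc.1 /\ H1 act Lc.1 Lc.2].
Proof.
move=> Tr_transversal.
pose P := [set Lg : {group gT} * (gT -> T) | inL Lg.1 /\ Tr Lg.1 Lg.2].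
have -> : [set E | exists L g, [/\ inL L, Tr L g & E = CL tL L g]]
    = (fun Lg => CL tL Lg.1 Lg.2) @` P.
  apply/seteqP; split.
  - by move=> E [L [g [inL_L Trg ->]]]; exists (L, g).
  - by move=> E [[L g] [inL_L Trg] <-]; exists L, g.
have -> : [set Lc : {group gT} * set (gT -> T) | inL Lc.1 /\ H1 act Lc.1 Lc.2]
    = (fun Lg => (Lg.1, coh_class Lg.1 Lg.2)) @` P.
  apply/seteqP; split.
  - move=> [L C] [/= inL_L]; rewrite (H1_transversalE (Tr_transversal L inL_L)).
    by move=> [g Trg <-]; exists (L, g).
  - move=> _ [[L g] [inL_L Trg] <-]; split=> //=.
    by rewrite (H1_transversalE (Tr_transversal L inL_L)); exists g.
apply: card_eq_trans (inj_card_eq _) (card_esym (inj_card_eq _)).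
- move=> [L g] [L' g']; rewrite !in_setE => -[inL_L Trg] [inL_L' Trg'] /= eq_CL.
  have [eqL eqg] := CL_inj ((Tr_transversal L inL_L).1 g Trg)
    ((Tr_transversal L' inL_L').1 g' Trg') eq_CL.
  by rewrite eqL eqg.
- move=> [L g] [L' g']; rewrite !in_setE => -[inL_L Trg] [_ Trg'] /= [eqL].
  by subst L' => /(coh_class_inj (Tr_transversal L inL_L) Trg Trg') /= ->.
Qed.

End Counting.

Theorem lemma6p1 (p d : nat) (gT : finGroupType) (T : zmodType)
  (act : T -> gT -> T) (rho : gT -> gT -> T)
  (tL : {group gT} -> gT -> T) (Tr : {group gT} -> set (gT -> T)) :
  prime p ->
  pgroup p [set: gT]%SET ->
  iso_to_Zp_pow p d T ->
  right_module act ->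
  Z2 act rho ->
  (* C_L is a complement to T in \overline{L}, for every L in \mathcal{L} *)
  (forall L : {group gT}, calL act rho p L ->
     subgroupS act rho (CL tL L (fun _ => 0))) ->
  (* Tr L = T^1(L,T) is a transversal of B^1(L,T) in Z^1(L,T) *)
  (forall L : {group gT}, calL act rho p L ->
     Tr L `<=` Z1 act L /\
     forall dl, Z1 act L dl ->
       exists! g, Tr L g /\ B1 act L (fun x => dl x - g x)) ->
  (* the objects C_L(gamma) of \overline{A}_p(S) are objects of A_p(S) *)
  (forall (L : {group gT}) g, calL act rho p L -> Tr L g ->
     elemabS act rho p (CL tL L g)) /\
  (* semi-skeleton: every object of A_p(S) is isomorphic to one of them *)
  (forall E, elemabS act rho p E ->
     exists (L : {group gT}) g,
       [/\ calL act rho p L, Tr L g & Aiso act rho E (CL tL L g)]) /\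
  (* number of objects = sum over L in \mathcal{L} of |H^1(L,T)| *)
  ([set E | exists (L : {group gT}) g,
       [/\ calL act rho p L, Tr L g & E = CL tL L g]]
   #= [set Lc : {group gT} * set (gT -> T) |
         calL act rho p Lc.1 /\ H1 act Lc.1 Lc.2]).
Proof.
move=> p_pr _ isoT actM rhoZ2 CL0_sub Tr_transversal.
have torsionT := Zp_pow_torsion_free (prime_gt0 p_pr) isoT.
split; [|split].
- move=> L g calL_L Trg; have [abelL _] := calL_L.
  exact (CL_elemab actM (CL0_sub L calL_L) p_pr abelL ((Tr_transversal L calL_L).1 g Trg)).
- move=> E EabS; have calL_E := elemab_proj_calL actM rhoZ2 p_pr torsionT EabS.
  have [g [[Trg Bg] _]] := (Tr_transversal _ calL_E).2 _
    (elemab_cocycle_Z1 actM rhoZ2 torsionT (CL0_sub _ calL_E)).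
  by exists (elemab_proj EabS), g; split=> //; exact: elemab_iso_CL.
- exact: card_CL_H1.
Qed.
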